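(* Let $\tau$ be an arithmetic signature and let $Q \subseteq \mathrm{STRUC}[\tau]$ be a $\tau$-problem. For each first-order $\tau$-formula $\phi$ (i.e. $\phi \in \mathrm{FO}[+,\times]$) that describes $Q$ eventually, there are quantifier-free $\tau$-formulas $\alpha$ and $\beta$ such that $(\alpha \land \phi) \lor \beta$ describes $Q$.
   Context: Signatures are finite and contain relation symbols and constant symbols, and possibly the special unary function symbol $\mathrm{succ}$; all structures are finite. A signature $\tau$ is arithmetic if it contains the binary relation $<$, the ternary relations $\mathrm{add}$ and $\mathrm{mult}$, the unary function symbol $\mathrm{succ}$ and the constant symbol $0$; in that case $\mathrm{STRUC}[\tau]$ denotes the class of finite $\tau$-structures in which $<$ is a linear order of the universe and $\mathrm{add}$, $\mathrm{mult}$, $\mathrm{succ}$, $0$ have their natural meaning with respect to this order (identifying the universe with $\{0,\dots,n-1\}$ via the order; $0$ is the minimum and the successor of the maximum element is itself). $\mathrm{FO}[+,\times]$ denotes first-order formulas over arithmetic signatures. A $\tau$-problem is a set $Q \subseteq \mathrm{STRUC}[\tau]$ closed under isomorphism. A $\tau$-sentence $\phi$ describes $Q$ if $Q = \{\mathcal A \in \mathrm{STRUC}[\tau] \mid \mathcal A \models \phi\}$, and it describes $Q$ eventually if there is a number $m$ such that for all $\mathcal A \in \mathrm{STRUC}[\tau]$ whose universe has at least $m$ elements we have $\mathcal A \models \phi$ iff $\mathcal A \in Q$. *)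

From mathcomp Require Import all_boot.
Set Implicit Arguments. Unset Strict Implicit. Unset Printing Implicit Defensive.

(* All signatures considered here contain the
   unary function symbol succ (every arithmetic signature does), so succ is
   built into terms and structures. *)
Record sig := Sig { Rel : finType; ar : Rel -> nat; Con : finType }.

Record asig := ASig {
  asig_sig :> sig;
  s_lt : Rel asig_sig;
  s_add : Rel asig_sig;
  s_mult : Rel asig_sig;
  s_zero : Con asig_sig;
  ar_lt : ar s_lt = 2;
  ar_add : ar s_add = 3;
  ar_mult : ar s_mult = 3;
  add_neq_mult : s_add <> s_mult }.

Record struc (s : sig) (A : finType) := Struc {
  srel : forall r : Rel s, {ffun 'I_(ar r) -> A} -> bool;
  scon : Con s -> A;
  ssucc : A -> A }.

Definition tupl (A : finType) (x : A) (l : seq A) (k : nat) : {ffun 'I_k -> A} :=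
  [ffun i : 'I_k => nth x l i].

(* M belongs to STRUC[tau]: < is a linear order of the universe and, via the
   identification of the universe with {0,..,n-1} along <, add, mult, succ, 0
   have their natural meaning (succ of the maximum is itself). *)
Definition is_arith (s : asig) (A : finType) (M : struc s A) : Prop :=
  exists f : A -> nat,
    injective f /\ (forall x, f x < #|A|) /\
    (forall x y, srel M (tupl x [:: x; y] (ar (s_lt s))) <-> f x < f y) /\
    (forall x y z, srel M (tupl x [:: x; y; z] (ar (s_add s))) <-> f x + f y = f z) /\
    (forall x y z, srel M (tupl x [:: x; y; z] (ar (s_mult s))) <-> f x * f y = f z) /\
    (forall x, f (ssucc M x) = if f x + 1 < #|A| then f x + 1 else f x) /\
    f (scon M (s_zero s)) = 0.

Definition is_iso (s : sig) (A B : finType) (M : struc s A) (N : struc s B)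
  (h : A -> B) : Prop :=
  bijective h /\
  (forall r (t : {ffun 'I_(ar r) -> A}), srel M t = srel N [ffun i => h (t i)]) /\
  (forall c, h (scon M c) = scon N c) /\
  (forall x, h (ssucc M x) = ssucc N (h x)).

Definition problem (s : asig) (Q : forall A : finType, struc s A -> Prop) : Prop :=
  (forall A (M : struc s A), Q A M -> is_arith M) /\
  (forall A B (M : struc s A) (N : struc s B) h, is_iso M N h -> Q A M -> Q B N).

Inductive term (s : sig) : Type :=
  | TVar of nat
  | TCon of Con s
  | TSucc of term s.

Inductive formula (s : sig) : Type :=
  | FRel (r : Rel s) of ('I_(ar r) -> term s)
  | FEq of term s & term s
  | FNot of formula s
  | FAnd of formula s & formula s
  | FOr of formula s & formula s
  | FEx of nat & formula s
  | FAll of nat & formula s.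

Fixpoint teval (s : sig) (A : finType) (M : struc s A) (e : nat -> A) (t : term s) : A :=
  match t with
  | TVar v => e v
  | TCon c => scon M c
  | TSucc t' => ssucc M (teval M e t')
  end.

Definition upd (A : Type) (e : nat -> A) (v : nat) (a : A) : nat -> A :=
  fun w => if w == v then a else e w.

Fixpoint sat (s : sig) (A : finType) (M : struc s A) (e : nat -> A) (f : formula s) : Prop :=
  match f with
  | FRel r ts => srel M [ffun i => teval M e (ts i)]
  | FEq t1 t2 => teval M e t1 = teval M e t2
  | FNot g => ~ sat M e g
  | FAnd g h => sat M e g /\ sat M e h
  | FOr g h => sat M e g \/ sat M e h
  | FEx v g => exists a : A, sat M (upd e v a) g
  | FAll v g => forall a : A, sat M (upd e v a) g
  end.

Fixpoint tfv (s : sig) (t : term s) : seq nat :=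
  match t with
  | TVar v => [:: v]
  | TCon _ => [::]
  | TSucc t' => tfv t'
  end.

Fixpoint fv (s : sig) (f : formula s) : seq nat :=
  match f with
  | FRel r ts => flatten [seq tfv (ts i) | i <- enum 'I_(ar r)]
  | FEq t1 t2 => tfv t1 ++ tfv t2
  | FNot g => fv g
  | FAnd g h | FOr g h => fv g ++ fv h
  | FEx v g | FAll v g => [seq w <- fv g | w != v]
  end.

Definition sentence (s : sig) (f : formula s) : Prop := fv f = [::].

Fixpoint qfree (s : sig) (f : formula s) : bool :=
  match f with
  | FRel _ _ | FEq _ _ => true
  | FNot g => qfree g
  | FAnd g h | FOr g h => qfree g && qfree h
  | FEx _ _ | FAll _ _ => false
  end.

(* truth of a sentence in a structure (environment irrelevant for sentences) *)
Definition models (s : sig) (A : finType) (M : struc s A) (f : formula s) : Prop :=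
  forall e : nat -> A, sat M e f.

Definition describes (s : asig) (Q : forall A : finType, struc s A -> Prop)
  (f : formula s) : Prop :=
  sentence f /\
  forall (A : finType) (M : struc s A), is_arith M -> (models M f <-> Q A M).

Definition describes_eventually (s : asig) (Q : forall A : finType, struc s A -> Prop)
  (f : formula s) : Prop :=
  sentence f /\
  exists m : nat, forall (A : finType) (M : struc s A),
    is_arith M -> m <= #|A| -> (models M f <-> Q A M).

(* Among structures of a fixed size n, an arithmetic structure is determined
   up to isomorphism by the truth values of the atomic sentences built from
   the numerals 0, ..., n-1, since every element is the value of a numeral.
   A quantifier-free sentence can therefore say "the size is n and the
   structure is in Q" for each single n, and the disjunction of these over the
   finitely many sizes below the threshold of phi gives beta.  The
   quantifier-free sentence alpha says that the structure is large, which is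
   expressible because the numerals k and k+1 coincide exactly when k reaches
   the maximum. *)
From mathcomp Require Import all_boot.
From mathcomp Require Import zify.
From Stdlib Require Import ClassicalEpsilon.
Set Implicit Arguments. Unset Strict Implicit. Unset Printing Implicit Defensive.

Section Syntax.
Context {s : asig}.

Definition FTrue : formula s := FEq (TCon (s_zero s)) (TCon (s_zero s)).
Definition FFalse : formula s := FNot FTrue.

Definition FAnds (I : Type) (l : seq I) (F : I -> formula s) : formula s :=
  foldr (fun i g => FAnd (F i) g) FTrue l.
Definition FOrs (I : Type) (l : seq I) (F : I -> formula s) : formula s :=
  foldr (fun i g => FOr (F i) g) FFalse l.

Definition literal (b : bool) (f : formula s) : formula s :=
  if b then f else FNot f.

Definition numeral (k : nat) : term s := iter k (@TSucc s) (TCon (s_zero s)).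

Definition card_le_succ (k : nat) : formula s := FEq (numeral k) (numeral k.+1).

Definition card_eq (n : nat) : formula s :=
  match n with
  | 0 => FFalse
  | 1 => card_le_succ 0
  | k.+2 => FAnd (card_le_succ k.+1) (FNot (card_le_succ k))
  end.

Definition atom_index (n : nat) : finType :=
  ({r : Rel s & {ffun 'I_(ar r) -> 'I_n}} + (Con s * 'I_n))%type.

Definition atom_formula (n : nat) (i : atom_index n) : formula s :=
  match i with
  | inl (existT r g) => FRel (fun j => numeral (g j))
  | inr (c, k) => FEq (TCon c) (numeral k)
  end.

Definition diagram (n : nat) (bs : {ffun atom_index n -> bool}) : formula s :=
  FAnd (card_eq n)
       (FAnds (enum (atom_index n)) (fun i => literal (bs i) (atom_formula i))).

Definition qf_sentence (f : formula s) : bool := nilp (fv f) && qfree f.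

Lemma qf_sentence_and (f g : formula s) :
  qf_sentence (FAnd f g) = qf_sentence f && qf_sentence g.
Proof. by rewrite /qf_sentence /= cat_nilp andbACA. Qed.

Lemma qf_sentence_or (f g : formula s) :
  qf_sentence (FOr f g) = qf_sentence f && qf_sentence g.
Proof. by rewrite /qf_sentence /= cat_nilp andbACA. Qed.

Lemma qf_sentence_not (f : formula s) : qf_sentence (FNot f) = qf_sentence f.
Proof. by []. Qed.

Lemma qf_sentence_ands (I : Type) (l : seq I) (F : I -> formula s) :
  (forall i, qf_sentence (F i)) -> qf_sentence (FAnds l F).
Proof. by move=> qfF; elim: l => [|i l IHl] //=; rewrite qf_sentence_and qfF. Qed.

Lemma qf_sentence_ors (I : Type) (l : seq I) (F : I -> formula s) :
  (forall i, qf_sentence (F i)) -> qf_sentence (FOrs l F).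
Proof. by move=> qfF; elim: l => [|i l IHl] //=; rewrite qf_sentence_or qfF. Qed.

Lemma tfv_numeral (k : nat) : tfv (numeral k) = [::].
Proof. by elim: k. Qed.

Lemma qf_card_le_succ (k : nat) : qf_sentence (card_le_succ k).
Proof. by rewrite /qf_sentence /= !tfv_numeral. Qed.

Lemma qf_card_eq (n : nat) : qf_sentence (card_eq n).
Proof.
case: n => [|[|k]]; [by [] | exact: qf_card_le_succ |].
by rewrite qf_sentence_and qf_sentence_not !qf_card_le_succ.
Qed.

Lemma qf_atom_formula (n : nat) (i : atom_index n) : qf_sentence (atom_formula i).
Proof.
case: i => [[r g]|[c k]]; rewrite /qf_sentence /= ?tfv_numeral //.
by rewrite andbT; elim: (enum _) => //= j l; rewrite tfv_numeral.
Qed.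

Lemma qf_diagram (n : nat) (bs : {ffun atom_index n -> bool}) :
  qf_sentence (diagram bs).
Proof.
rewrite qf_sentence_and qf_card_eq; apply: qf_sentence_ands => i.
by case: (bs i); rewrite /literal ?qf_sentence_not qf_atom_formula.
Qed.

End Syntax.

Section Semantics.
Context {s : asig} (A : finType) (M : struc s A).

Definition numval (k : nat) : A := iter k (ssucc M) (scon M (s_zero s)).

Definition atom_holds (n : nat) (i : @atom_index s n) : bool :=
  match i with
  | inl (existT r g) => srel M [ffun j => numval (g j)]
  | inr (c, k) => scon M c == numval k
  end.

Lemma teval_numeral (e : nat -> A) (k : nat) : teval M e (numeral k) = numval k.
Proof. by elim: k => //= k ->. Qed.

Lemma sat_FAnds (e : nat -> A) (I : eqType) (l : seq I) (F : I -> formula s) :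
  sat M e (FAnds l F) <-> {in l, forall i, sat M e (F i)}.
Proof.
elim: l => [|i l IHl] /=; first by split.
rewrite IHl; split=> [[Fi Fl] j|Fl]; first by rewrite inE => /predU1P[->|/Fl].
by split=> [|j lj]; apply: Fl; rewrite inE ?eqxx ?lj ?orbT.
Qed.

Lemma sat_FOrs (e : nat -> A) (I : eqType) (l : seq I) (F : I -> formula s) :
  sat M e (FOrs l F) <-> exists2 i, i \in l & sat M e (F i).
Proof.
elim: l => [|i l IHl] /=; first by split=> [[]|[]].
rewrite IHl; split=> [[Fi|[j lj Fj]]|[j]]; first by exists i; rewrite ?inE ?eqxx.
  by exists j; rewrite // inE lj orbT.
by rewrite inE => /predU1P[->|lj Fj]; [left | right; exists j].
Qed.

Lemma sat_literal (e : nat -> A) (b : bool) (f : formula s) (P : bool) :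
  (sat M e f <-> P) -> (sat M e (literal b f) <-> P = b).
Proof. by case: b; case: P => /= ->; split. Qed.

Lemma sat_atom_formula (e : nat -> A) (n : nat) (i : @atom_index s n) :
  sat M e (atom_formula i) <-> atom_holds i.
Proof.
case: i => [[r g]|[c k]] /=; last by rewrite teval_numeral; split=> /eqP.
rewrite (_ : [ffun j => _] = [ffun j => numval (g j)]) //.
by apply/ffunP => j; rewrite !ffunE teval_numeral.
Qed.

Hypothesis arithM : is_arith M.

Lemma is_arith_rank :
  exists f : A -> nat, [/\ cancel f numval, forall x, f x < #|A|
                         & forall k, f (numval k) = minn k #|A|.-1].
Proof.
case: arithM => f [f_inj [f_lt [_ [_ [_ [f_succ f_zero]]]]]].
move: #|A| f_lt f_succ => N f_lt f_succ.
have f_numval k : f (numval k) = minn k N.-1.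
  have := f_lt (scon M (s_zero s)).
  elim: k => [|k IHk] ltA; first by rewrite /= f_zero; lia.
  by rewrite /= f_succ -/(numval k) IHk //; case: ifP; lia.
exists f; split=> // x; apply: f_inj; rewrite f_numval; have := f_lt x; lia.
Qed.

Lemma card_arith_gt0 : 0 < #|A|.
Proof.
by case: is_arith_rank => f [_ f_lt _]; apply: leq_ltn_trans (f_lt (numval 0)).
Qed.

Lemma numval_eq (k l : nat) :
  numval k = numval l <-> minn k #|A|.-1 = minn l #|A|.-1.
Proof.
case: is_arith_rank => f [fK _ f_numval]; rewrite -!f_numval.
by split=> [-> // | /(congr1 numval)]; rewrite !fK.
Qed.

Lemma sat_card_le_succ (e : nat -> A) (k : nat) :
  sat M e (card_le_succ k) <-> #|A| <= k.+1.
Proof.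
rewrite /= !teval_numeral; change (numval k = numval k.+1 <-> #|A| <= k.+1).
by rewrite numval_eq; have := card_arith_gt0; lia.
Qed.

Lemma sat_card_eq (e : nat -> A) (n : nat) : sat M e (card_eq n) <-> #|A| = n.
Proof.
have := card_arith_gt0; case: n => [|[|k]] A_gt0.
- by split=> [[] | A0]; last by move: A_gt0; rewrite A0.
- by rewrite sat_card_le_succ; lia.
- change (sat M e (card_le_succ k.+1) /\ ~ sat M e (card_le_succ k) <-> #|A| = k.+2).
  by rewrite !sat_card_le_succ; lia.
Qed.

Lemma sat_diagram (e : nat -> A) (n : nat) (bs : {ffun @atom_index s n -> bool}) :
  sat M e (diagram bs) <-> #|A| = n /\ forall i, atom_holds i = bs i.
Proof.
rewrite /= sat_card_eq sat_FAnds.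
have sat_lit i := sat_literal (bs i) (sat_atom_formula e i).
split=> [[-> bsM] | [-> bsM]]; split=> // i; last by move=> _; apply/sat_lit.
by apply/sat_lit/bsM; rewrite mem_enum.
Qed.

End Semantics.

Section Isomorphism.
Context {s : asig} (A B : finType) (M : struc s A) (N : struc s B) (n : nat).
Hypotheses (arithM : is_arith M) (arithN : is_arith N).
Hypotheses (cardA : #|A| = n) (cardB : #|B| = n).

Lemma arith_iso_of_atoms :
  (forall i : @atom_index s n, atom_holds M i = atom_holds N i) ->
  exists h : A -> B, is_iso M N h.
Proof.
move=> atomsMN.
have [fM [fMK fM_lt fM_numval]] := is_arith_rank arithM.
have [fN [fNK _ fN_numval]] := is_arith_rank arithN.
have {}fM_lt x : fM x < n by rewrite -cardA.
have hE k : numval N (fM (numval M k)) = numval N k.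
  by apply/numval_eq => //; rewrite fM_numval cardA -cardB; lia.
have h'E k : numval M (fN (numval N k)) = numval M k.
  by apply/numval_eq => //; rewrite fN_numval cardB -cardA; lia.
exists (fun x => numval N (fM x)); split; [|split; [|split]].
- exists (fun y => numval M (fN y)) => [x|y].
    by rewrite h'E fMK.
  by rewrite hE fNK.
- move=> r t; pose g := [ffun j => Ordinal (fM_lt (t j))].
  have := atomsMN (inl (existT _ r g)) => /=.
  rewrite (_ : [ffun j => numval M (g j)] = t) => [->|]; last first.
    by apply/ffunP => j; rewrite !ffunE fMK.
  by congr (srel N _); apply/ffunP => j; rewrite !ffunE.
- move=> c; have := atomsMN (inr (c, Ordinal (fM_lt (scon M c)))).
  by rewrite /= fMK eqxx => /esym/eqP.
- move=> x; rewrite -{1}(fMK x).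
  by change (numval N (fM (numval M (fM x).+1)) = numval N (fM x).+1); rewrite hE.
Qed.

End Isomorphism.

Lemma classical_pred (T : Type) (P : T -> Prop) :
  exists p : pred T, forall x, p x <-> P x.
Proof.
exists (fun x => if excluded_middle_informative (P x) then true else false) => x.
by case: excluded_middle_informative.
Qed.

Lemma qf_card_eq_class (s : asig) (Q : forall A : finType, struc s A -> Prop)
  (HQ : problem Q) (n : nat) :
  exists2 g : formula s, qf_sentence g &
    forall (A : finType) (M : struc s A) e, is_arith M ->
      (sat M e g <-> #|A| = n /\ Q A M).
Proof.
pose realized (bs : {ffun @atom_index s n -> bool}) :=
  exists (B : finType) (N : struc s B),
    [/\ Q B N, #|B| = n & forall i, atom_holds N i = bs i].
have [p pE] := classical_pred realized.
exists (FOrs (enum p) (@diagram s n)) => [|A M e arithM].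
  exact/qf_sentence_ors/qf_diagram.
rewrite sat_FOrs; split=> [[bs] | [cardA QM]].
- rewrite mem_enum => /pE[B [N [QN cardB atomsN]]] /(sat_diagram arithM)[cardA atomsM].
  have [|h isoh] := arith_iso_of_atoms (HQ.1 _ _ QN) arithM cardB cardA.
    by move=> i; rewrite atomsN atomsM.
  by split=> //; apply: HQ.2 isoh QN.
- exists [ffun i => atom_holds M i].
    by rewrite mem_enum; apply/pE; exists A, M; split=> // i; rewrite ffunE.
  by apply/sat_diagram => //; split=> // i; rewrite ffunE.
Qed.

Lemma qf_card_lt_class (s : asig) (Q : forall A : finType, struc s A -> Prop)
  (HQ : problem Q) (k : nat) :
  exists2 b : formula s, qf_sentence b &
    forall (A : finType) (M : struc s A) e, is_arith M ->
      (sat M e b <-> #|A| < k /\ Q A M).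
Proof.
elim: k => [|k [b qf_b bE]]; first by exists FFalse => // A M e _; split=> [[]|[]].
have [g qf_g gE] := qf_card_eq_class HQ k.
exists (FOr b g) => [|A M e arithM]; first by rewrite qf_sentence_or qf_b.
rewrite /= bE // gE //; move: #|A| => N.
split=> [[[ltNk QM] | [eqNk QM]] | [ltNk1 QM]]; [split=> //; lia .. |].
have [ltNk | eqNk] : N < k \/ N = k by lia.
- by left.
- by right.
Qed.

Theorem lemma2p1 (s : asig) (Q : forall A : finType, struc s A -> Prop)
  (HQ : problem Q) (phi : formula s) :
  describes_eventually Q phi ->
  exists alpha beta : formula s,
    qfree alpha /\ qfree beta /\
    describes Q (FOr (FAnd alpha phi) beta).
Proof.
move=> [phi_sentence [m phiE]].
have [beta /andP[/nilP fv_beta qf_beta] betaE] := qf_card_lt_class HQ m.+2.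
exists (FNot (card_le_succ m)), beta; split=> //; split=> //; split.
  by rewrite /sentence /= !tfv_numeral phi_sentence fv_beta.
move=> A M arithM.
have alphaE e : sat M e (FNot (card_le_succ m)) <-> m.+2 <= #|A|.
  change (~ sat M e (card_le_succ m) <-> m.+2 <= #|A|).
  by rewrite sat_card_le_succ //; lia.
have [large | small] := leqP m.+2 #|A|.
- rewrite -phiE //; last by lia.
  split=> [sat_or e | phi_true e]; last by left; split; [apply/alphaE | apply: phi_true].
  case: (sat_or e) => [[] // | /betaE[] //]; lia.
- split=> [/(_ (fun _ => scon M (s_zero s))) | QM e]; last by right; apply/betaE.
  case=> [[/alphaE] | /betaE[]] //; lia.
Qed.
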